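(* Let $n,m\ge1$, let $\mathfrak{g}$ be of type $B_n$, and let $\lambda=\sum_{i=1}^n c_i\epsilon_i$ be a dominant integral weight with all $c_i\in\mathbb{Z}$ (so $c_1\ge c_2\ge\cdots\ge c_n\ge 0$ are integers). The multiplicity of $V(\lambda)$ in $V(\omega_n)^{\otimes 2m}$ (equivalently, of $B(\lambda)$ in $B(\omega_n)^{\otimes 2m}$) equals the determinant of the $n\times n$ matrix \[ \left[\operatorname{Cat}_{(a(i,j),\,b(i,j))}\right]_{i,j=1}^n,\qquad a(i,j)=2n-i-j+m+c_j,\quad b(i,j)=j-i+m-c_j. \]
   Context: For type $B_n$ ($\mathfrak{so}_{2n+1}$), weights are written in the basis $\epsilon_1,\dots,\epsilon_n$ and $V(\omega_n)$ is the spin representation with highest weight $\omega_n=\tfrac12(\epsilon_1+\cdots+\epsilon_n)$. The Catalan triangle numbers are $\operatorname{Cat}_{(a,b)}=\binom{a+b}{b}-\binom{a+b}{b-1}$ for $0\le b\le a$ and $\operatorname{Cat}_{(a,b)}=0$ if $b<0$ or $b>a$ (equivalently, the number of lattice paths from $(0,0)$ to $(a,b)$ with unit steps $(1,0)$ and $(0,1)$ staying weakly below the line $y=x$). *)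

From HB Require Import structures.
From mathcomp Require Import all_boot all_order all_algebra.
Set Implicit Arguments. Unset Strict Implicit. Unset Printing Implicit Defensive.
Import Order.TTheory GRing.Theory Num.Theory.
Local Open Scope ring_scope.

(* For naturals b <= a: Cat_(a,b) = C(a+b,b) - C(a+b,b-1), with C(_, -1) = 0. *)
Definition catn (a b : nat) : nat :=
  if b == 0%N then 1%N else ('C(a + b, b) - 'C(a + b, b.-1))%N.

Definition Cat (a b : int) : int :=
  if (0 <= b) && (b <= a) then (catn `|a|%N `|b|%N)%:Z else 0.

(* Weights are functions nat -> rat, coordinate k (k < n) being the
   coefficient of epsilon_(k+1).  Simple roots are indexed by i < n:
   alpha_(i+1) = eps_(i+1) - eps_(i+2) for i+1 < n, alpha_n = eps_n. *)
Definition hpair (n i : nat) (mu : nat -> rat) : rat :=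
  if (i.+1 < n)%N then mu i - mu i.+1 else 2 * mu i.

(* Elements: sign vectors s in {+,-}^n, encoded as seq bool of size n
   (true = +); weight (1/2) sum_k s_k eps_k. *)
Definition wt_spin (n : nat) (s : seq bool) : nat -> rat :=
  fun k => if (k < n)%N then (if nth false s k then 1/2 else -(1/2)) else 0.

Definition e_spin (n i : nat) (s : seq bool) : option (seq bool) :=
  if (i.+1 < n)%N then
    (if ~~ nth false s i && nth false s i.+1
     then Some (set_nth false (set_nth false s i true) i.+1 false) else None)
  else if ~~ nth false s i then Some (set_nth false s i true) else None.

(* eps_i(b) = max{k | e_i^k b defined}; all i-strings in B(omega_n) have
   length <= 1, so eps_i(b) = 1 if e_i b is defined and 0 otherwise. *)
Definition eps_spin (n i : nat) (s : seq bool) : rat :=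
  if e_spin n i s is Some _ then 1 else 0.

(* A word [:: b1; ...; bN] stands for b1 (x) b2 (x) ... (x) bN
   = (...((b1 (x) b2) (x) b3) ...) (x) bN.  The functions below take the
   REVERSED word r = [:: bN; ...; b1]. *)
Fixpoint wt_r (n : nat) (r : seq (seq bool)) : nat -> rat :=
  match r with
  | [::] => fun _ => 0
  | b :: r' => fun k => wt_r n r' k + wt_spin n b k
  end.

Fixpoint eps_r (n i : nat) (r : seq (seq bool)) : rat :=
  match r with
  | [::] => 0
  | b :: r' => Num.max (eps_r n i r') (eps_spin n i b - hpair n i (wt_r n r'))
  end.

Definition phi_r (n i : nat) (r : seq (seq bool)) : rat :=
  eps_r n i r + hpair n i (wt_r n r).

Fixpoint e_r (n i : nat) (r : seq (seq bool)) : option (seq (seq bool)) :=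
  match r with
  | [::] => None
  | b :: r' =>
      if eps_spin n i b <= phi_r n i r'
      then omap (fun r'' => b :: r'') (e_r n i r')
      else omap (fun b' => b' :: r') (e_spin n i b)
  end.

Definition wt_word (n : nat) (w : seq (seq bool)) := wt_r n (rev w).
Definition e_word (n i : nat) (w : seq (seq bool)) := omap (@rev _) (e_r n i (rev w)).

Definition word_of (n N : nat) (w : N.-tuple (n.-tuple bool)) : seq (seq bool) :=
  [seq val x | x <- w].

(* Multiplicity of B(lambda) in B(omega_n)^{(x) N}, lambda = sum_k c_k eps_(k+1):
   the number of highest weight elements (e_i b undefined for all i) of
   weight lambda. *)
Definition spin_mult (n N : nat) (c : 'I_n -> nat) : nat :=
  #|[set w : N.-tuple (n.-tuple bool) |
      [forall i : 'I_n, e_word n i (word_of w) == None] &&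
      [forall k : 'I_n, wt_word n (word_of w) k == (c k)%:R]]|.

(* Entries a(i,j), b(i,j) for 1-based i = i0+1, j = j0+1. *)
Definition cat_a (n m : nat) (c : 'I_n -> nat) (i j : 'I_n) : int :=
  (2 * n)%:Z - (i.+1)%:Z - (j.+1)%:Z + m%:Z + (c j)%:Z.
Definition cat_b (n m : nat) (c : 'I_n -> nat) (i j : 'I_n) : int :=
  (j.+1)%:Z - (i.+1)%:Z + m%:Z - (c j)%:Z.

From mathcomp Require Import all_boot all_order all_algebra perm.
From mathcomp Require Import zify ring lra.
Set Implicit Arguments. Unset Strict Implicit. Unset Printing Implicit Defensive.
Import Order.TTheory GRing.Theory Num.Theory.
Local Open Scope ring_scope.

(* A word of spin vectors is a highest weight element iff every prefix has dominant
   weight.  In the coordinates [y = 2 (wt + rho) - 1], [rho = (n - 1/2, ..., 1/2)], these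
   words are the walks with steps in [{-1, 1}^n] from [2 rho - 1] that stay in the
   chamber [y_k >= y_(k+1) + 2, y_n >= 0].  Their number satisfies the same
   recursion in the length [N] as [det (W_(N + 2(n - j)) (y_i))], where [W_L(y)] counts
   one-dimensional ballot walks: expanding each row along the last step, the steps that
   leave the chamber produce two equal rows or a row at height [-1], whose determinants
   vanish.  Both agree at [N = 0], and [W_(A + B)(A - B)] is the Catalan triangle number
   [Cat_(A, B)], which gives the stated matrix after transposition. *)

Lemma sum_tupleS (R : nmodType) (T : finType) N (G : N.+1.-tuple T -> R) :
  \sum_(r : N.+1.-tuple T) G r = \sum_(b : T) \sum_(r : N.-tuple T) G [tuple of b :: r].
Proof.
rewrite pair_big /= (reindex (fun p : T * N.-tuple T => [tuple of p.1 :: p.2])) //=.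
exists (fun t : N.+1.-tuple T => (thead t, [tuple of behead t])) => [[b r] _ | t _] /=.
  by rewrite theadE; congr (_, _); apply: val_inj.
by rewrite -tuple_eta.
Qed.

Lemma det_sum_rows (R : comNzRingType) (T : finType) n (F : 'I_n -> T -> 'I_n -> R) :
  \det (\matrix_(i, j) \sum_(t : T) F i t j) =
  \sum_(b : n.-tuple T) \det (\matrix_(i, j) F i (tnth b i) j).
Proof.
rewrite {1}/determinant; transitivity (\sum_(s : 'S_n) (-1) ^+ s *
   \sum_(f : {ffun 'I_n -> T}) \prod_i F i (f i) (s i)).
  apply: eq_bigr => s _; congr (_ * _); under eq_bigr do rewrite mxE; exact: bigA_distr_bigA.
rewrite (eq_bigr _ (fun s _ => mulr_sumr _ _ _ _)) exchange_big /=.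
rewrite (reindex (fun f : {ffun 'I_n -> T} => [tuple f i | i < n])) /=.
  apply: eq_bigr => f _; rewrite /determinant; apply: eq_bigr => s _.
  by congr (_ * _); apply: eq_bigr => i _; rewrite mxE tnth_mktuple.
exists (fun b : n.-tuple T => [ffun i => tnth b i]) => [f _ | b _].
  by apply/ffunP => i; rewrite ffunE tnth_mktuple.
by apply: eq_from_tnth => i; rewrite tnth_mktuple ffunE.
Qed.

Fixpoint ballot_walks (L : nat) (y : int) : int :=
  match L with
  | 0%N => (y == 0)%:R
  | L'.+1 => if y < 0 then 0 else ballot_walks L' (y - 1) + ballot_walks L' (y + 1)
  end.

Lemma ballot_walks_neg L y : y < 0 -> ballot_walks L y = 0.
Proof. by case: L => [|L] /= y_lt0; [rewrite lt_eqF | rewrite y_lt0]. Qed.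

Lemma ballot_walks_gt L y : L%:Z < y -> ballot_walks L y = 0.
Proof.
elim: L y => [|L IHL] y /= L_lt_y; first by rewrite gt_eqF.
by case: ifP => // _; rewrite !IHL //; lia.
Qed.

Lemma ballot_walks_diag L : ballot_walks L L = 1.
Proof.
elim: L => [|L IHL] //=.
rewrite (ballot_walks_gt (y := L.+1 + 1)) ?addr0; last by lia.
by have -> : L.+1%:Z - 1 = L by lia.
Qed.

Definition binz (N : nat) (k : int) : int := if k < 0 then 0 else 'C(N, `|k|%N)%:Z.

Lemma binzS N k : binz N.+1 k = binz N k + binz N (k - 1).
Proof.
rewrite /binz; case: (ltP k 0) => [k_lt0 | k_ge0]; first by rewrite ifT ?addr0 //; lia.
case: (ltP (k - 1) 0) => [k1_lt0 | k1_ge0].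
  have -> : k = 0 by lia.
  by rewrite !bin0 addr0.
have -> : `|k|%N = (`|k - 1|%N).+1 by lia.
by rewrite binS PoszD addrC.
Qed.

Lemma Cat_eq0 (A B : int) : (B < 0) || (A < B) -> Cat A B = 0.
Proof. by rewrite /Cat => out; rewrite ifF //; lia. Qed.

(* The Catalan triangle formula also holds at [B = A + 1], where both sides vanish. *)
Lemma Cat_binz (A B : int) : 0 <= A + B -> B <= A + 1 ->
  Cat A B = binz (absz (A + B)) B - binz (absz (A + B)) (B - 1).
Proof.
move=> AB_ge0 B_le; rewrite /binz.
case: (ltP B 0) => [B_lt0 | B_ge0]; first by rewrite Cat_eq0 ?ifT //; lia.
have [a [b [eA eB]]] : exists a b : nat, A = a /\ B = b by exists `|A|%N, `|B|%N; lia.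
subst A B; have -> : absz (a%:Z + b%:Z) = (a + b)%N by lia.
case: b B_le {B_ge0 AB_ge0} => [|b] B_le; first by rewrite /Cat /catn /= bin0 subr0.
have -> : (b.+1%:Z - 1 < 0) = false by lia.
have -> : `|b.+1%:Z - 1|%N = b by lia.
have [->|b_lt_a] := eqVneq a b.
  rewrite Cat_eq0; last by lia.
  by rewrite -(bin_sub (leq_addl b b.+1)) addnK subrr.
rewrite /Cat ifT; last by lia.
rewrite /catn /= -subzn //.
rewrite -(@leq_pmul2l b.+1) // mul_bin_left leq_mul2r.
by apply/orP; right; lia.
Qed.

Lemma Cat_rec (A B : int) : B <= A -> 1 <= A + B -> Cat A B = Cat (A - 1) B + Cat A (B - 1).
Proof.
move=> B_le_A AB_ge1.
have [N eN] : exists N : nat, A + B = N.+1 by exists (absz (A + B - 1)%R); lia.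
rewrite !Cat_binz; try lia.
have -> : absz (A + B) = N.+1 by lia.
have -> : absz (A - 1 + B) = N by lia.
have -> : absz (A + (B - 1)) = N by lia.
by rewrite !binzS; ring.
Qed.

Lemma ballot_walks_Cat L (A B : int) : A + B = L%:Z -> B <= A -> ballot_walks L (A - B) = Cat A B.
Proof.
elim: L A B => [|L IHL] A B AB_L B_le_A /=.
  have [AB0|AB0] := eqVneq (A - B) 0; first by have [-> ->] : A = 0 /\ B = 0 by lia.
  by rewrite Cat_eq0 //; lia.
rewrite ifF; last by lia.
rewrite Cat_rec //; last by lia.
have -> : A - B + 1 = A - (B - 1) by lia.
rewrite (IHL A (B - 1)); try lia.
case: (leP B (A - 1)) => [B_le_A1 | A1_lt_B].
  have -> : A - B - 1 = (A - 1) - B by lia.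
  by rewrite IHL //; lia.
by rewrite ballot_walks_neg ?(@Cat_eq0 (A - 1)) ?add0r //; lia.
Qed.

Definition sgnb (t : bool) : int := if t then 1 else -1.

Definition unstep (y : nat -> int) (b : seq bool) : nat -> int :=
  fun k => y k - sgnb (nth false b k).

Definition walk_mx n N (y : nat -> int) : 'M[int]_n :=
  \matrix_(i, j) ballot_walks (N + 2 * (n - j.+1)) (y i).

Lemma det_walk_mxS n N (y : nat -> int) : (forall i, (i < n)%N -> 0 <= y i) ->
  \det (walk_mx n N.+1 y) = \sum_(b : n.-tuple bool) \det (walk_mx n N (unstep y b)).
Proof.
move=> y_ge0.
have -> : walk_mx n N.+1 y =
    \matrix_(i, j) \sum_(t : bool) ballot_walks (N + 2 * (n - j.+1)) (y i - sgnb t).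
  apply/matrixP => i j; rewrite !mxE big_bool /= ifF ?opprK //.
  by have := y_ge0 i (ltn_ord i); lia.
rewrite det_sum_rows; apply: eq_bigr => b _; congr (\det _).
by apply/matrixP => i j; rewrite !mxE (tnth_nth false).
Qed.

Lemma det_walk_mx_eq_rows n N (y : nat -> int) (i1 i2 : 'I_n) :
  i1 != i2 -> y i1 = y i2 -> \det (walk_mx n N y) = 0.
Proof. by move=> i12 y12; apply: (determinant_alternate i12) => j; rewrite !mxE y12. Qed.

Lemma det_walk_mx_neg_row n N (y : nat -> int) (i : 'I_n) :
  y i < 0 -> \det (walk_mx n N y) = 0.
Proof.
by move=> yi_lt0; rewrite (expand_det_row _ i) big1 // => j _; rewrite mxE ballot_walks_neg ?mul0r.
Qed.

Definition chamber_at n (y : nat -> int) (k : nat) : bool :=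
  if (k.+1 < n)%N then y k.+1 + 2 <= y k else 0 <= y k.

Definition chamber n (y : nat -> int) : bool := [forall k : 'I_n, chamber_at n y k].

Lemma chamberP n y k : chamber n y -> (k < n)%N -> chamber_at n y k.
Proof. by move=> /forallP y_ch k_lt_n; apply: (y_ch (Ordinal k_lt_n)). Qed.

Lemma chamber_ext n (y z : nat -> int) :
  (forall k, (k < n)%N -> y k = z k) -> chamber n y = chamber n z.
Proof.
move=> yz; apply: eq_forallb => k; rewrite /chamber_at !(yz k) //.
by case: ifP => // k1_lt_n; rewrite yz.
Qed.

Lemma chamber_lb n y k : chamber n y -> (k < n)%N -> (2 * (n - k.+1))%N%:Z <= y k.
Proof.
move=> y_ch; move: {2}(n - k.+1)%N (erefl (n - k.+1)%N) => d.
elim: d k => [|d IHd] k dk k_lt_n; have := chamberP y_ch k_lt_n; rewrite /chamber_at.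
  by rewrite ifF; lia.
by rewrite ifT; have := IHd k.+1; lia.
Qed.

Lemma det_walk_mx0 n (y : nat -> int) : chamber n y ->
  \det (walk_mx n 0 y) = [forall k : 'I_n, y k == (2 * (n - k.+1))%N%:Z]%:R.
Proof.
move=> y_ch; have y_lb := chamber_lb y_ch.
rewrite det_trig; last first.
  apply/is_trig_mxP => i j ij; rewrite mxE ballot_walks_gt //.
  by have := y_lb i (ltn_ord i); have := ltn_ord j; lia.
case: (boolP [forall k : 'I_n, _]) => [/forallP y_eq|].
  by apply: big1 => i _; rewrite mxE (eqP (y_eq i)) ballot_walks_diag.
rewrite negb_forall => /existsP [k yk].
rewrite (bigD1 k) //= mxE ballot_walks_gt ?mul0r //.
by have := y_lb k (ltn_ord k); move: yk; lia.
Qed.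

(* Leaving the chamber through a wall [y k = y k.+1 + 2] lands on [y k = y k.+1] (two equal rows),
   through the wall [y (n - 1) = 0] on [y (n - 1) = -1] (a vanishing row). *)
Lemma det_walk_mx_out n N (y : nat -> int) (b : seq bool) :
  chamber n y -> (forall k, (k.+1 < n)%N -> exists d : int, y k = y k.+1 + 2 * d) ->
  ~~ chamber n (unstep y b) -> \det (walk_mx n N (unstep y b)) = 0.
Proof.
move=> y_ch y_par; rewrite negb_forall => /existsP [k]; rewrite /chamber_at /unstep.
case: ifP => [k1_lt_n | _] yk; last by apply: (@det_walk_mx_neg_row _ _ _ k); lia.
have [d yd] := y_par k k1_lt_n.
have := chamberP y_ch (ltn_ord k); rewrite /chamber_at k1_lt_n => y_wall.
apply: (@det_walk_mx_eq_rows _ _ _ k (Ordinal k1_lt_n)); first by rewrite -val_eqE /= neq_ltn ltnSn.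
by move: yk; rewrite /sgnb /=; case: (nth false b k); case: (nth false b k.+1); lia.
Qed.

(* For the reversed word [r], [spin_walk n r = 2 (wt_r n r + rho) - 1] (see [wt_r_spin_walk]). *)
Fixpoint spin_walk n (r : seq (seq bool)) : nat -> int :=
  match r with
  | [::] => fun k => (2 * (n - k.+1))%N%:Z
  | b :: r' => fun k => spin_walk n r' k + sgnb (nth false b k)
  end.

Fixpoint chamber_walk n (r : seq (seq bool)) : bool :=
  if r is _ :: r' then chamber_walk n r' && chamber n (spin_walk n r) else true.

Definition chamber_walks n N (y : nat -> int) : int :=
  \sum_(r : N.-tuple (n.-tuple bool))
    (chamber_walk n (map val r) && [forall k : 'I_n, spin_walk n (map val r) k == y k])%:R.

Lemma chamber_walk_end n r : chamber_walk n r -> chamber n (spin_walk n r).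
Proof.
case: r => [_ |b r /andP[]//]; apply/forallP => k; rewrite /chamber_at.
by case: ifP => /=; lia.
Qed.

Lemma chamber_walks_out n N y : ~~ chamber n y -> chamber_walks n N y = 0.
Proof.
move=> y_out; apply: big1 => r _; case: andP => // [[/chamber_walk_end r_ch /forallP r_y]].
move/negP: y_out; case; rewrite -(chamber_ext (y := spin_walk n (map val r))) // => k k_lt_n.
exact/eqP/(r_y (Ordinal k_lt_n)).
Qed.

Lemma chamber_walksS n N y : chamber n y ->
  chamber_walks n N.+1 y = \sum_(b : n.-tuple bool) chamber_walks n N (unstep y b).
Proof.
move=> y_ch; rewrite /chamber_walks sum_tupleS; apply: eq_bigr => b _.
apply: eq_bigr => r _ /=; set R := map val r.
have -> : [forall k : 'I_n, spin_walk n R k + sgnb (nth false b k) == y k] =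
          [forall k : 'I_n, spin_walk n R k == unstep y b k].
  by apply: eq_forallb => k; rewrite /unstep; apply/eqP/eqP; lia.
case: (boolP [forall k : 'I_n, _]) => [/forallP R_y|]; last by rewrite !andbF.
rewrite !andbT (chamber_ext (z := y)) ?y_ch ?andbT // => k k_lt_n.
by rewrite (eqP (R_y (Ordinal k_lt_n))) /unstep subrK.
Qed.

Lemma chamber_walks_det n N y : chamber n y ->
  (forall k, (k < n)%N -> exists d : int, y k = 2 * d + N%:Z) ->
  chamber_walks n N y = \det (walk_mx n N y).
Proof.
elim: N y => [|N IHN] y y_ch y_par.
  rewrite det_walk_mx0 // /chamber_walks (big_pred1 [tuple]) => [|r]; last exact/esym/eqP/tuple0.
  by congr ((nat_of_bool _)%:R); apply: eq_forallb => k; rewrite eq_sym.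
rewrite chamber_walksS // det_walk_mxS => [|i i_lt_n]; last first.
  by have := chamber_lb y_ch i_lt_n; lia.
apply: eq_bigr => b _; case: (boolP (chamber n (unstep y b))) => yb_ch.
  apply: IHN => // k k_lt_n; have [d yd] := y_par k k_lt_n.
  by exists (if nth false b k then d else d + 1); rewrite /unstep /sgnb; case: nth; lia.
rewrite chamber_walks_out // det_walk_mx_out // => k k1_lt_n.
have [d1 yd1] := y_par k (ltnW k1_lt_n); have [d2 yd2] := y_par k.+1 k1_lt_n.
by exists (d1 - d2); lia.
Qed.

Lemma wt_r_spin_walk n R k : (k < n)%N ->
  wt_r n R k * 2 = (spin_walk n R k)%:~R - 2 * (n - k.+1)%:R.
Proof.
move=> k_lt_n; elim: R => [|b R IHR] /=; first by rewrite -pmulrn natrM; ring.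
by rewrite intrD mulrDl IHR /wt_spin k_lt_n /sgnb; case: nth => /=; lra.
Qed.

Lemma chamber_at_spin_walk n R (i : 'I_n) :
  chamber_at n (spin_walk n R) i = (0 <= hpair n i (wt_r n R)).
Proof.
have wt_i := wt_r_spin_walk R (ltn_ord i); rewrite /chamber_at /hpair.
case: ifP => [i1_lt_n | /negbT i_last].
  have wt_i1 := wt_r_spin_walk R i1_lt_n.
  rewrite (_ : (n - i.+1)%N = (n - i.+2).+1) ?natrS in wt_i; last by lia.
  rewrite -(ler_int rat) intrD -pmulrn.
  by apply/idP/idP; lra.
rewrite (_ : (n - i.+1)%N = 0%N) ?mulr0 ?subr0 in wt_i; last by move: i_last; rewrite -leqNgt; lia.
by rewrite -(ler_int rat); apply/idP/idP; lra.
Qed.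

Lemma hpairD n i (f g : nat -> rat) :
  hpair n i (fun k => f k + g k) = hpair n i f + hpair n i g.
Proof. by rewrite /hpair; case: ifP => _; ring. Qed.

Lemma phi_spin_ge0 n (i : 'I_n) b : 0 <= eps_spin n i b + hpair n i (wt_spin n b).
Proof.
rewrite /eps_spin /e_spin /hpair /wt_spin ltn_ord.
by case: ifP => _; case: (nth false b i); try case: (nth false b i.+1); rewrite /=; lra.
Qed.

(* [eps_i(b) = max(0, -<h_i, wt b>)] on the spin crystal, with [<h_i, wt b>] in [{-1, 0, 1}]. *)
Lemma eps_spin_le n (i : 'I_n) b (h : rat) : 0 <= h ->
  (eps_spin n i b <= h) = (0 <= h + hpair n i (wt_spin n b)).
Proof.
rewrite /eps_spin /e_spin /hpair /wt_spin ltn_ord => h_ge0.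
by case: ifP => _; case: (nth false b i); try case: (nth false b i.+1);
  rewrite /=; apply/idP/idP; lra.
Qed.

Lemma eps_r_ge0 n i R : 0 <= eps_r n i R.
Proof. by elim: R => [|b R IHR] //=; rewrite le_max IHR. Qed.

Lemma phi_r_ge0 n (i : 'I_n) R : 0 <= phi_r n i R.
Proof.
case: R => [|b R]; rewrite /phi_r /=; first by rewrite /hpair; case: ifP => _; lra.
rewrite hpairD; have := phi_spin_ge0 i b; set x := eps_spin n i b - _.
have : x <= Num.max (eps_r n i R) x by rewrite le_max lexx orbT.
by rewrite /x; lra.
Qed.

Lemma eps_r_le0_cons n i b R :
  (eps_r n i (b :: R) <= 0) = (eps_r n i R <= 0) && (eps_spin n i b <= hpair n i (wt_r n R)).
Proof. by rewrite /= ge_max subr_le0. Qed.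

Lemma e_r_eq_None n (i : 'I_n) R : (e_r n i R == None) = (eps_r n i R <= 0).
Proof.
elim: R => [|b R IHR] /=; first by rewrite lexx.
have eps_ge0 := eps_r_ge0 n i R; rewrite ge_max subr_le0 /phi_r.
case: ifP => [le_phi | /negbT].
  have -> : (eps_r n i R <= 0) && (eps_spin n i b <= hpair n i (wt_r n R)) = (eps_r n i R <= 0).
    by apply/andb_idr => R0; lra.
  by rewrite -IHR; case: e_r.
rewrite -ltNge; have := phi_r_ge0 i R; rewrite /phi_r /eps_spin.
case: e_spin => [b'|] /= phi_ge0 gt_phi; last by lra.
by apply/esym/negP => /andP[]; lra.
Qed.

Lemma highest_weight_chamber_walk n R :
  [forall i : 'I_n, eps_r n i R <= 0] = chamber_walk n R.
Proof.
elim: R => [|b R IHR]; first by apply/forallP => i /=.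
transitivity ([forall i : 'I_n, eps_r n i R <= 0] &&
              [forall i : 'I_n, eps_spin n i b <= hpair n i (wt_r n R)]).
  apply/forallP/andP => [hw | [/forallP R_hw /forallP b_le] i]; last first.
    by rewrite eps_r_le0_cons R_hw b_le.
  by split; apply/forallP => i; have := hw i; rewrite eps_r_le0_cons => /andP[].
rewrite IHR /=; case R_ch: (chamber_walk n R) => //=.
apply: eq_forallb => i; have := chamberP (chamber_walk_end R_ch) (ltn_ord i).
rewrite chamber_at_spin_walk => wt_dom.
rewrite -[chamber_at n _ i]/(chamber_at n (spin_walk n (b :: R)) i) chamber_at_spin_walk.
by rewrite eps_spin_le // hpairD addrC.
Qed.

Lemma wt_r_eq_spin_walk n R (k : 'I_n) (c : nat) :
  (wt_r n R k == c%:R) = (spin_walk n R k == (2 * c + 2 * (n - k.+1))%N%:Z).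
Proof.
have wt_k := wt_r_spin_walk R (ltn_ord k).
rewrite -(eqr_int rat) -pmulrn natrD !natrM; apply/eqP/eqP => [wt_c | sw_c]; first lra.
by apply: (mulIf (x := 2)) => //; lra.
Qed.

Lemma spin_mult_chamber_walks n N c (y : nat -> int) :
  (forall k : 'I_n, y k = (2 * c k + 2 * (n - k.+1))%N%:Z) ->
  (spin_mult N c)%:Z = chamber_walks n N y.
Proof.
move=> yE; rewrite /spin_mult -sum1dep_card -natz natr_sum big_mkcond /chamber_walks.
rewrite (reindex_inj (h := fun w : N.-tuple (n.-tuple bool) => [tuple of rev w])); last first.
  by move=> w w' /(congr1 val) /(congr1 rev); rewrite !revK => /val_inj.
apply: eq_bigr => r _; rewrite /word_of map_rev /e_word /wt_word revK.
set R := map val r.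
have -> : [forall i : 'I_n, omap (@rev _) (e_r n i R) == None] = chamber_walk n R.
  by rewrite -highest_weight_chamber_walk; apply: eq_forallb => i; rewrite -e_r_eq_None; case: e_r.
have -> : [forall k : 'I_n, wt_r n R k == (c k)%:R] = [forall k : 'I_n, spin_walk n R k == y k].
  by apply: eq_forallb => k; rewrite yE wt_r_eq_spin_walk.
by case: ifP.
Qed.

Theorem theorem4p4 (n m : nat) (c : 'I_n -> nat)
  (hn : (1 <= n)%N) (hm : (1 <= m)%N)
  (hdom : forall i j : 'I_n, (i <= j)%N -> (c j <= c i)%N) :
  (@spin_mult n (2 * m)%N c)%:Z =
  \det (\matrix_(i < n, j < n) Cat (@cat_a n m c i j) (@cat_b n m c i j)).
Proof.
case: n c hdom hn => [//|n] c c_dom _.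
pose y k := (2 * c (inord k) + 2 * (n.+1 - k.+1))%N%:Z.
have yE (k : 'I_n.+1) : y k = (2 * c k + 2 * (n.+1 - k.+1))%N%:Z by rewrite /y inord_val.
have y_ch : chamber n.+1 y.
  apply/forallP => k; rewrite /chamber_at; case: ifP => k1_lt; last by [].
  have := c_dom (inord k) (inord k.+1); rewrite !inordK ?ltn_ord //.
  by rewrite /y => /(_ (leqnSn _)); lia.
have y_par k : (k < n.+1)%N -> exists d : int, y k = 2 * d + (2 * m)%N%:Z.
  by move=> _; exists ((c (inord k) + (n.+1 - k.+1))%N%:Z - m%:Z); rewrite /y; lia.
rewrite (spin_mult_chamber_walks _ yE) chamber_walks_det // -det_tr.
congr (\det _); apply/matrixP => i j; rewrite !mxE yE.
have -> : (2 * c j + 2 * (n.+1 - j.+1))%N%:Z = cat_a m c i j - cat_b m c i j.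
  by have := ltn_ord j; rewrite /cat_a /cat_b; lia.
by apply: ballot_walks_Cat; have := ltn_ord i; have := ltn_ord j; rewrite /cat_a /cat_b; lia.
Qed.
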